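(* Let $\rho$, $V$ satisfy the standing assumptions below, let $Y(t)=(\varphi(t),\pi(t),q(t),p(t))\in C(\mathbb{R},\mathcal{E})$ be a solution of the system such that $q^3(t)=0$ for all $t\in\mathbb{R}$, and define $\bar q_1=\sup_{t\in\mathbb{R}}|\dot q(t)|$ and $\Theta$ as below. Then for every $\omega\in S_1=\{\omega\in\mathbb{R}^3:|\omega|=1\}$ with $|\omega^3|\ge\Theta$ and every $t\in\mathbb{R}$, $$\bar\pi(\omega,t)=\frac1{4\pi}\int\rho(y-q(\bar\tau))\,\frac{\omega\cdot\ddot q(\bar\tau)}{(1-\omega\cdot\dot q(\bar\tau))^2}\,dy,\qquad \bar\tau=t+\omega\cdot y.$$
   Context: Standing assumptions: $V\in C^2(\mathbb{R}^3)$ with $\lim_{|q|\to\infty}V(q)=\infty$; $\rho\in C_0^\infty(\mathbb{R}^3)$ real, radial, with $\rho(x)=0$ for $|x|\ge R_\rho$. The system is $\dot\varphi=\pi$, $\dot\pi=\Delta\varphi-\rho(x-q(t))$, $\dot q=p$, $\dot p=-\nabla V(q)+\int\varphi(x,t)\nabla\rho(x-q(t))dx$, with phase space $\mathcal{E}=\mathring H^1\oplus L^2\oplus\mathbb{R}^3\oplus\mathbb{R}^3$; solutions exist globally in $C(\mathbb{R},\mathcal{E})$ and $\sup_t|q^{(k)}(t)|<\infty$ for $k=0,1,2,3$. Define $$\bar\pi(\omega,t)=-\frac1{4\pi}\int\nabla\rho\big(y-q(\bar\tau)\big)\cdot\dot q(\bar\tau)\,dy,\qquad \bar\tau=t+\omega\cdot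 y.$$ $\Theta=0$ if $\bar q_1<1$, and $\Theta=\varepsilon+\sqrt{1-\bar q_1^{-2}}$ if $\bar q_1\ge1$, where $\varepsilon$ is a fixed number with $0<\varepsilon<1-\sqrt{1-\bar q_1^{-2}}$. *)

From Stdlib Require Import Reals.
From Coquelicot Require Import Coquelicot.
Open Scope R_scope.

Definition V3 := (R * R * R)%type.
Definition mk3 (a b c : R) : V3 := ((a, b), c).
Definition c1 (x : V3) : R := fst (fst x).
Definition c2 (x : V3) : R := snd (fst x).
Definition c3 (x : V3) : R := snd x.
Definition add3 (x y : V3) : V3 := mk3 (c1 x + c1 y) (c2 x + c2 y) (c3 x + c3 y).
Definition sub3 (x y : V3) : V3 := mk3 (c1 x - c1 y) (c2 x - c2 y) (c3 x - c3 y).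
Definition scal3 (s : R) (x : V3) : V3 := mk3 (s * c1 x) (s * c2 x) (s * c3 x).
Definition dot3 (x y : V3) : R := c1 x * c1 y + c2 x * c2 y + c3 x * c3 y.
Definition norm3 (x : V3) : R := sqrt (dot3 x x).

(* standard basis vector e_i, i = 0,1,2 (other indices give e_3) *)
Definition basis3 (i : nat) : V3 :=
  match i with 0 => mk3 1 0 0 | 1 => mk3 0 1 0 | _ => mk3 0 0 1 end.

(* partial derivative  d f / d x_{i+1} *)
Definition partial3 (i : nat) (f : V3 -> R) (x : V3) : R :=
  Derive (fun s => f (add3 x (scal3 s (basis3 i)))) 0.

Definition grad3 (f : V3 -> R) (x : V3) : V3 :=
  mk3 (partial3 0 f x) (partial3 1 f x) (partial3 2 f x).

Fixpoint Ck3 (k : nat) (f : V3 -> R) : Prop :=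
  (forall x : V3, continuous f x) /\
  match k with
  | O => True
  | S k' => forall i : nat, (i < 3)%nat ->
      (forall x, ex_derive (fun s => f (add3 x (scal3 s (basis3 i)))) 0)
      /\ Ck3 k' (partial3 i f)
  end.

Definition smooth3 (f : V3 -> R) : Prop := forall k, Ck3 k f.

Definition radial3 (f : V3 -> R) : Prop :=
  forall x y, norm3 x = norm3 y -> f x = f y.

Definition int3 (f : V3 -> R) : R :=
  RInt_gen (fun a =>
    RInt_gen (fun b =>
      RInt_gen (fun c => f (mk3 a b c))
        (Rbar_locally m_infty) (Rbar_locally p_infty))
      (Rbar_locally m_infty) (Rbar_locally p_infty))
    (Rbar_locally m_infty) (Rbar_locally p_infty).

Definition qbar1 (dq : R -> V3) : R :=
  real (Lub_Rbar (fun r => exists t, r = norm3 (dq t))).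

Definition Theta (qb1 eps : R) : R :=
  if Rlt_dec qb1 1 then 0 else eps + sqrt (1 - / (qb1 ^ 2)).

Definition pibar (rho : V3 -> R) (q dq : R -> V3) (omega : V3) (t : R) : R :=
  - / (4 * PI) *
  int3 (fun y => let tau := t + dot3 omega y in
                 dot3 (grad3 rho (sub3 y (q tau))) (dq tau)).

From Pilot Require Import Defs.
From Stdlib Require Import Reals Lra Lia.
From Coquelicot Require Import Coquelicot.
From Stdlib Require Import Classical ClassicalEpsilon FunctionalExtensionality.
Open Scope R_scope.

(* Write tau = t + omega.y for the retarded time, X = y - q(tau) and
   W = 1 - omega.q'(tau).  Because q moves in the plane x3 = 0 with speed at
   most qbar1, the condition |omega3| >= Theta forces |omega.q'| < 1, so W never
   vanishes.  The compactly supported vector field F_j = rho(X) q'_j(tau) / W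
   then has divergence
     sum_j d_j F_j = grad rho(X).q'(tau) + rho(X) omega.q''(tau) / W^2,
   and the integral of a divergence of compact support is zero (fundamental
   theorem of calculus in each variable, under the iterated integral).  Hence
   the integrand of pibar and the claimed integrand have opposite integrals. *)

(* Every index [i >= 2] denotes the third coordinate, as in [basis3]. *)
Definition coord3 (i : nat) (x : V3) : R :=
  match i with 0 => Defs.c1 x | 1 => Defs.c2 x | _ => Defs.c3 x end.

Definition set_coord3 (i : nat) (x : V3) (s : R) : V3 :=
  match i with
  | 0 => mk3 s (Defs.c2 x) (Defs.c3 x)
  | 1 => mk3 (Defs.c1 x) s (Defs.c3 x)
  | _ => mk3 (Defs.c1 x) (Defs.c2 x) s
  end.

Lemma coord3_add3_scal3 i x s v :
  coord3 i (add3 x (scal3 s v)) = coord3 i x + s * coord3 i v.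
Proof. now destruct i as [|[|i]]. Qed.

Lemma coord3_sub3 i x y : coord3 i (sub3 x y) = coord3 i x - coord3 i y.
Proof. now destruct i as [|[|i]]. Qed.

Lemma coord3_scal3 i c x : coord3 i (scal3 c x) = c * coord3 i x.
Proof. now destruct i as [|[|i]]. Qed.

Lemma coord3_minus i (y P : V3) : coord3 i (minus y P) = coord3 i y - coord3 i P.
Proof. now destruct i as [|[|i]]. Qed.

Lemma sub3_minus (y P : V3) : sub3 y P = minus y P.
Proof. now destruct y as [[? ?] ?], P as [[? ?] ?]. Qed.

Lemma dot3_coord3 (v w : V3) :
  dot3 v w = coord3 0 v * coord3 0 w + coord3 1 v * coord3 1 w + coord3 2 v * coord3 2 w.
Proof. reflexivity. Qed.

Lemma set_coord3_coord3 i x : set_coord3 i x (coord3 i x) = x.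
Proof. now destruct x as [[? ?] ?], i as [|[|i]]. Qed.

Lemma set_coord3_add3 i x s :
  set_coord3 i x s = add3 x (scal3 (s - coord3 i x) (basis3 i)).
Proof.
  destruct x as [[a b] c], i as [|[|i]]; cbn; unfold add3, scal3, mk3; cbn;
    apply f_equal2; try apply f_equal2; ring.
Qed.

Lemma dot3_set_coord3 w i x s :
  dot3 w (set_coord3 i x s) = dot3 w x + coord3 i w * (s - coord3 i x).
Proof.
  rewrite set_coord3_add3.
  destruct i as [|[|i]]; unfold dot3, add3, scal3; cbn; ring.
Qed.

Lemma dot3_grad3_basis3 (f : V3 -> R) x j : dot3 (grad3 f x) (basis3 j) = partial3 j f x.
Proof.
  destruct j as [|[|j]]; unfold dot3; cbn; [ring | ring |].
  change (partial3 (S (S j)) f x) with (partial3 2 f x). ring.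
Qed.

Lemma Rabs_coord3_basis3_le1 i k : Rabs (coord3 i (basis3 k)) <= 1.
Proof. destruct i as [|[|i]], k as [|[|k]]; cbn; rewrite ?Rabs_R0, ?Rabs_R1; lra. Qed.

Lemma Rabs_coord3_le_norm3 i v : Rabs (coord3 i v) <= norm3 v.
Proof.
  unfold norm3, dot3. rewrite <- sqrt_Rsqr_abs. apply sqrt_le_1_alt.
  destruct v as [[a b] c]; unfold Rsqr.
  destruct i as [|[|i]]; cbn; nra.
Qed.

Lemma Rabs_coord3_le_norm i (v : V3) : Rabs (coord3 i v) <= norm v.
Proof.
  destruct v as [[a b] c].
  pose proof (norm_le_prod_norm_1 ((a, b), c)). pose proof (norm_le_prod_norm_2 ((a, b), c)).
  pose proof (norm_le_prod_norm_1 (a, b)). pose proof (norm_le_prod_norm_2 (a, b)).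
  destruct i as [|[|i]]; cbn in *; lra.
Qed.

Lemma Rabs_triang3 x y z : Rabs (x + y + z) <= Rabs x + Rabs y + Rabs z.
Proof. pose proof (Rabs_triang (x + y) z). pose proof (Rabs_triang x y). lra. Qed.

Lemma Rabs_dot3_le (v w : V3) :
  Rabs (dot3 v w) <= (Rabs (coord3 0 v) + Rabs (coord3 1 v) + Rabs (coord3 2 v)) * norm w.
Proof.
  rewrite dot3_coord3.
  eapply Rle_trans; [apply Rabs_triang3|]. rewrite !Rabs_mult, !Rmult_plus_distr_r.
  repeat apply Rplus_le_compat;
    apply Rmult_le_compat_l; try apply Rabs_pos; apply Rabs_coord3_le_norm.
Qed.

Lemma ball_V3 (P z : V3) (d : R) :
  ball P d z <-> forall i, Rabs (coord3 i z - coord3 i P) < d.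
Proof.
  destruct P as [[p1 p2] p3], z as [[z1 z2] z3]. split.
  - intros [[H1 H2] H3] [|[|i]]; assumption.
  - intro H. exact (conj (conj (H 0%nat) (H 1%nat)) (H 2%nat)).
Qed.

Lemma continuous_Rplus {U : UniformSpace} (f g : U -> R) x :
  continuous f x -> continuous g x -> continuous (fun y => f y + g y) x.
Proof. apply (continuous_plus (V := R_NormedModule)). Qed.

Lemma continuous_Rminus {U : UniformSpace} (f g : U -> R) x :
  continuous f x -> continuous g x -> continuous (fun y => f y - g y) x.
Proof. apply (continuous_minus (V := R_NormedModule)). Qed.

Lemma continuous_Rmult {U : UniformSpace} (f g : U -> R) x :
  continuous f x -> continuous g x -> continuous (fun y => f y * g y) x.
Proof. apply (continuous_mult (K := R_AbsRing)). Qed.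

Lemma continuous_Rdiv_fun {U : UniformSpace} (f g : U -> R) x :
  continuous f x -> continuous g x -> g x <> 0 -> continuous (fun y => f y / g y) x.
Proof.
  intros Hf Hg Hg0. apply continuous_Rmult; [exact Hf|].
  apply (continuous_comp g Rinv); [exact Hg | apply continuous_Rinv, Hg0].
Qed.

Lemma continuous_coord3 i (x : V3) : continuous (coord3 i) x.
Proof.
  destruct i as [|[|i]]; cbn.
  - apply (continuous_comp fst fst); apply continuous_fst.
  - apply (continuous_comp fst snd); [apply continuous_fst | apply continuous_snd].
  - apply continuous_snd.
Qed.

Ltac solve_continuous :=
  repeat match goal with
  | |- continuous (fun _ => _ + _) _ => apply continuous_Rplus
  | |- continuous (fun _ => _ - _) _ => apply continuous_Rminus
  | |- continuous (fun _ => _ * _) _ => apply continuous_Rmult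
  | |- continuous (fun _ => ?c) _ => apply continuous_const
  | |- continuous (coord3 _) _ => apply continuous_coord3
  | H : continuous ?f ?x |- continuous ?f ?x => exact H
  end.

Lemma continuous_pair {U V W : UniformSpace} (f : U -> V) (g : U -> W) x :
  continuous f x -> continuous g x -> continuous (fun u => (f u, g u)) x.
Proof.
  intros Hf Hg. apply (continuous_comp_2 f g pair); auto.
  apply (continuous_ext (fun z => z)); [now intros [? ?] | apply continuous_id].
Qed.

Lemma continuous_section {X : UniformSpace} (f : X -> R -> R) y t :
  continuous (fun p : X * R => f (fst p) (snd p)) (y, t) -> continuous (f y) t.
Proof.
  intro H. apply (continuous_comp_2 (fun _ => y) (fun s => s) f t);
    auto using continuous_const, continuous_id.
Qed.

Lemma continuous_of_is_derive (f : R -> R) df T : is_derive f T df -> continuous f T.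
Proof. intro Hf. apply (ex_derive_continuous (V := R_NormedModule)). now exists df. Qed.

Lemma is_derive_ext_R (f g : R -> R) x l :
  (forall s, f s = g s) -> is_derive f x l -> is_derive g x l.
Proof. apply is_derive_ext. Qed.

Lemma is_derive_Rmult (f g : R -> R) x df dg :
  is_derive f x df -> is_derive g x dg -> is_derive (fun y => f y * g y) x (df * g x + f x * dg).
Proof. intros Hf Hg. apply (is_derive_mult f g); auto using Rmult_comm. Qed.

Lemma is_linear_coord3 i : is_linear (coord3 i : V3 -> R).
Proof.
  destruct i as [|[|i]]; cbn.
  - apply (is_linear_comp fst fst); apply is_linear_fst.
  - apply (is_linear_comp fst snd); [apply is_linear_fst | apply is_linear_snd].
  - apply is_linear_snd.
Qed.

Lemma is_derive_coord3 (v dv : R -> V3) i T :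
  is_derive v T (dv T) -> is_derive (fun T => coord3 i (v T)) T (coord3 i (dv T)).
Proof.
  intro Hv. eapply filterdiff_ext_lin.
  - apply (filterdiff_comp v (coord3 i) _ (coord3 i) Hv).
    apply filterdiff_linear, is_linear_coord3.
  - intro h. now destruct i as [|[|i]].
Qed.

Lemma is_derive_dot3 (v dv : R -> V3) (w : V3) T : is_derive v T (dv T) ->
  is_derive (fun T => dot3 w (v T)) T (dot3 w (dv T)).
Proof.
  intro Hv. rewrite dot3_coord3.
  apply (is_derive_ext_R (fun T => coord3 0 w * coord3 0 (v T) + coord3 1 w * coord3 1 (v T)
                                   + coord3 2 w * coord3 2 (v T))); [reflexivity|].
  repeat apply (is_derive_plus (V := R_NormedModule));
    apply is_derive_scal, is_derive_coord3, Hv.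
Qed.

Lemma is_derive_pair {U V : NormedModule R_AbsRing} (u : R -> U) (v : R -> V) s du dv :
  is_derive u s du -> is_derive v s dv -> is_derive (fun s => (u s, v s)) s (du, dv).
Proof.
  intros Hu Hv. eapply filterdiff_ext_lin.
  - apply (filterdiff_comp'_2 u v pair s _ _ pair Hu Hv).
    apply (filterdiff_ext (fun t => t)); [now intros [? ?]|].
    apply (filterdiff_ext_lin _ (fun t => t)); [apply filterdiff_id | now intros [? ?]].
  - reflexivity.
Qed.

Lemma is_derive_V3 (g : R -> V3) s dg :
  (forall i, is_derive (fun s => coord3 i (g s)) s (coord3 i dg)) -> is_derive g s dg.
Proof.
  intro Hg.
  apply (is_derive_ext (fun s => mk3 (coord3 0 (g s)) (coord3 1 (g s)) (coord3 2 (g s)))).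
  { intro r. now destruct (g r) as [[? ?] ?]. }
  destruct dg as [[d1 d2] d3].
  apply is_derive_pair; [apply is_derive_pair|];
    [apply (Hg 0%nat) | apply (Hg 1%nat) | apply (Hg 2%nat)].
Qed.

Lemma MVT_increment (phi dphi : R -> R) a b :
  (forall u, is_derive phi u (dphi u)) ->
  exists xi, Rabs (xi - a) <= Rabs (b - a) /\ phi b - phi a = dphi xi * (b - a).
Proof.
  intro Hphi.
  destruct (MVT_gen phi a b dphi) as [xi [Hxi Eq]].
  - intros; apply Hphi.
  - intros u _. apply continuity_pt_filterlim, (continuous_of_is_derive _ _ _ (Hphi u)).
  - exists xi. split; [|exact Eq].
    unfold Rmin, Rmax in Hxi. destruct (Rle_dec a b); unfold Rabs;
      repeat destruct Rcase_abs; lra.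
Qed.

(** * Continuously differentiable functions on R^3 *)

Lemma C1_partial3 (f : V3 -> R) : Ck3 1 f -> forall i,
  (forall x, ex_derive (fun s => f (add3 x (scal3 s (basis3 i)))) 0) /\
  (forall x, continuous (partial3 i f) x).
Proof.
  intros [_ Hf] i.
  destruct (Hf (Nat.min i 2) ltac:(lia)) as [Hd [Hc _]].
  destruct i as [|[|i]]; split; assumption.
Qed.

Lemma C1_continuous_partial3 (f : V3 -> R) : Ck3 1 f ->
  forall i x, continuous (partial3 i f) x.
Proof. intros Hf i. exact (proj2 (C1_partial3 f Hf i)). Qed.

Lemma C1_is_derive_partial3 (f : V3 -> R) : Ck3 1 f -> forall i x,
  is_derive (fun s => f (set_coord3 i x s)) (coord3 i x) (partial3 i f x).
Proof.
  intros Hf i x.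
  apply (is_derive_ext_R (fun s => f (add3 x (scal3 (s - coord3 i x) (basis3 i))))).
  { intro s. now rewrite set_coord3_add3. }
  replace (partial3 i f x) with (1 * partial3 i f x) by ring.
  apply (is_derive_comp (fun s => f (add3 x (scal3 s (basis3 i)))) (fun s => s - coord3 i x)).
  - rewrite Rminus_diag. apply Derive_correct, (C1_partial3 f Hf i).
  - auto_derive; [exact I | ring].
Qed.

Lemma C1_mean_value (f : V3 -> R) a1 a2 a3 b1 b2 b3 : Ck3 1 f ->
  exists x1 x2 x3,
    Rabs (x1 - a1) <= Rabs (b1 - a1) /\ Rabs (x2 - a2) <= Rabs (b2 - a2) /\
    Rabs (x3 - a3) <= Rabs (b3 - a3) /\
    f (mk3 b1 b2 b3) - f (mk3 a1 a2 a3) =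
      partial3 0 f (mk3 x1 b2 b3) * (b1 - a1) + partial3 1 f (mk3 a1 x2 b3) * (b2 - a2)
      + partial3 2 f (mk3 a1 a2 x3) * (b3 - a3).
Proof.
  intro Hf. pose proof (C1_is_derive_partial3 f Hf) as Hd.
  destruct (MVT_increment (fun u => f (mk3 u b2 b3)) (fun u => partial3 0 f (mk3 u b2 b3)) a1 b1)
    as [x1 [H1 E1]]; [intro u; exact (Hd 0%nat (mk3 u b2 b3))|].
  destruct (MVT_increment (fun u => f (mk3 a1 u b3)) (fun u => partial3 1 f (mk3 a1 u b3)) a2 b2)
    as [x2 [H2 E2]]; [intro u; exact (Hd 1%nat (mk3 a1 u b3))|].
  destruct (MVT_increment (fun u => f (mk3 a1 a2 u)) (fun u => partial3 2 f (mk3 a1 a2 u)) a3 b3)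
    as [x3 [H3 E3]]; [intro u; exact (Hd 2%nat (mk3 a1 a2 u))|].
  exists x1, x2, x3. repeat split; auto. lra.
Qed.

Lemma C1_increment (f : V3 -> R) (P : V3) (eps : posreal) : Ck3 1 f ->
  exists delta : posreal, forall B : V3, ball P delta B ->
    Rabs (f B - f P - dot3 (grad3 f P) (sub3 B P))
      <= eps * (Rabs (coord3 0 B - coord3 0 P) + Rabs (coord3 1 B - coord3 1 P)
                + Rabs (coord3 2 B - coord3 2 P)).
Proof.
  intro Hf.
  assert (Hi : forall i, locally P (fun z => Rabs (partial3 i f z - partial3 i f P) < eps))
    by (intro i; exact (C1_continuous_partial3 f Hf i P _ (locally_ball _ eps))).
  destruct (filter_and _ _ (Hi 0%nat) (filter_and _ _ (Hi 1%nat) (Hi 2%nat)))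
    as [delta Hdelta].
  exists delta. intros B HB. pose proof (cond_pos delta).
  assert (Hnear : forall z, (forall i, Rabs (coord3 i z - coord3 i P) < delta) ->
            Rabs (partial3 0 f z - partial3 0 f P) < eps /\
            Rabs (partial3 1 f z - partial3 1 f P) < eps /\
            Rabs (partial3 2 f z - partial3 2 f P) < eps)
    by (intros z Hz; apply Hdelta, ball_V3, Hz).
  pose proof (proj1 (ball_V3 P B delta) HB) as HBi.
  pose proof (HBi 0%nat) as HB1; pose proof (HBi 1%nat) as HB2; pose proof (HBi 2%nat) as HB3.
  destruct P as [[p1 p2] p3], B as [[b1 b2] b3]; cbn in HB1, HB2, HB3.
  change (p1, p2, p3) with (mk3 p1 p2 p3) in *. change (b1, b2, b3) with (mk3 b1 b2 b3) in *.
  destruct (C1_mean_value f p1 p2 p3 b1 b2 b3 Hf) as (x1 & x2 & x3 & H1 & H2 & H3 & E).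
  assert (Hterm : forall a x, Rabs a < eps -> Rabs (a * x) <= eps * Rabs x).
  { intros a x Ha. rewrite Rabs_mult. apply Rmult_le_compat_r; [apply Rabs_pos | lra]. }
  pose proof (Hterm _ (b1 - p1) (proj1 (Hnear (mk3 x1 b2 b3)
                ltac:(intros [|[|i]]; cbn; lra)))).
  pose proof (Hterm _ (b2 - p2) (proj1 (proj2 (Hnear (mk3 p1 x2 b3)
                ltac:(intros [|[|i]]; cbn; rewrite ?Rminus_diag, ?Rabs_R0; lra))))).
  pose proof (Hterm _ (b3 - p3) (proj2 (proj2 (Hnear (mk3 p1 p2 x3)
                ltac:(intros [|[|i]]; cbn; rewrite ?Rminus_diag, ?Rabs_R0; lra))))).
  replace (f (mk3 b1 b2 b3) - f (mk3 p1 p2 p3)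
           - dot3 (grad3 f (mk3 p1 p2 p3)) (sub3 (mk3 b1 b2 b3) (mk3 p1 p2 p3)))
    with ((partial3 0 f (mk3 x1 b2 b3) - partial3 0 f (mk3 p1 p2 p3)) * (b1 - p1)
          + (partial3 1 f (mk3 p1 x2 b3) - partial3 1 f (mk3 p1 p2 p3)) * (b2 - p2)
          + (partial3 2 f (mk3 p1 p2 x3) - partial3 2 f (mk3 p1 p2 p3)) * (b3 - p3))
    by (unfold dot3, grad3, sub3; cbn; lra).
  eapply Rle_trans; [apply Rabs_triang3|]. cbn. lra.
Qed.

Lemma filterdiff_C1 (f : V3 -> R) (P : V3) : Ck3 1 f ->
  filterdiff f (locally P) (dot3 (grad3 f P)).
Proof.
  intro Hf. split.
  - split.
    + intros [[? ?] ?] [[? ?] ?]. unfold dot3; cbn; ring.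
    + intros k [[? ?] ?]. unfold dot3; cbn. change scal with Rmult. ring.
    + set (M := Rabs (coord3 0 (grad3 f P)) + Rabs (coord3 1 (grad3 f P))
                + Rabs (coord3 2 (grad3 f P))).
      exists (M + 1). split.
      * pose proof (Rabs_pos (coord3 0 (grad3 f P))).
        pose proof (Rabs_pos (coord3 1 (grad3 f P))).
        pose proof (Rabs_pos (coord3 2 (grad3 f P))). unfold M. lra.
      * intro x. eapply Rle_trans; [apply Rabs_dot3_le|].
        pose proof (norm_ge_0 x). fold M. lra.
  - intros x Hx. destruct (is_filter_lim_locally_unique _ _ Hx). intro eps.
    assert (Heps3 : 0 < eps / 3) by (pose proof (cond_pos eps); lra).
    destruct (C1_increment f P (mkposreal _ Heps3) Hf) as [delta Hdelta].
    exists delta. intros B HB. specialize (Hdelta B HB). cbn [pos] in Hdelta.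
    rewrite sub3_minus, <- !coord3_minus in Hdelta.
    pose proof (Rabs_coord3_le_norm 0 (minus B P)).
    pose proof (Rabs_coord3_le_norm 1 (minus B P)).
    pose proof (Rabs_coord3_le_norm 2 (minus B P)).
    change (Rabs (f B - f P - dot3 (grad3 f P) (minus B P)) <= eps * norm (minus B P)).
    eapply Rle_trans; [exact Hdelta|].
    apply Rle_trans with (eps / 3 * (3 * norm (minus B P))); [|lra].
    apply Rmult_le_compat_l; lra.
Qed.

Lemma is_derive_C1_comp (f : V3 -> R) (g : R -> V3) s dg : Ck3 1 f -> is_derive g s dg ->
  is_derive (fun s => f (g s)) s (dot3 (grad3 f (g s)) dg).
Proof.
  intros Hf Hg. eapply filterdiff_ext_lin.
  - exact (filterdiff_comp' g f s _ _ Hg (filterdiff_C1 f (g s) Hf)).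
  - intro h. destruct dg as [[? ?] ?]. unfold dot3; cbn. change scal with Rmult. ring.
Qed.

Lemma RInt_eq0 (f : R -> R) a b :
  (forall x, Rmin a b < x < Rmax a b -> f x = 0) -> RInt f a b = 0.
Proof.
  intro H. rewrite (RInt_ext f (fun _ => 0)) by exact H.
  rewrite RInt_const. apply Rmult_0_r.
Qed.

Lemma ex_RInt_continuous_R (f : R -> R) a b : (forall x, continuous f x) -> ex_RInt f a b.
Proof. intro Hf. apply (ex_RInt_continuous (V := R_CompleteNormedModule)). intros; apply Hf. Qed.

Lemma RInt_plus_R (f g : R -> R) a b : ex_RInt f a b -> ex_RInt g a b ->
  RInt (fun x => f x + g x) a b = RInt f a b + RInt g a b.
Proof. exact (RInt_plus f g a b). Qed.

Lemma RInt_gen_compact_support (f : R -> R) (L : R) : 0 <= L ->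
  (forall x, continuous f x) -> (forall x, L <= Rabs x -> f x = 0) ->
  RInt_gen f (Rbar_locally m_infty) (Rbar_locally p_infty) = RInt f (-L) L.
Proof.
  intros HL Hc Hz. apply is_RInt_gen_unique. intros P HP.
  apply Filter_prod with (Q := fun a => a < -L) (R := fun b => L < b);
    [now exists (-L) | now exists L |].
  intros a b Ha Hb. exists (RInt f (-L) L). split; [|exact (locally_singleton _ _ HP)].
  replace (RInt f (-L) L) with (RInt f a b);
    [apply RInt_correct, ex_RInt_continuous_R, Hc|].
  rewrite <- (RInt_Chasles f a (-L) b), <- (RInt_Chasles f (-L) L b)
    by apply ex_RInt_continuous_R, Hc.
  rewrite (RInt_eq0 f a (-L)), (RInt_eq0 f L b).
  - change (0 + (RInt f (-L) L + 0) = RInt f (-L) L). ring.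
  - intros x Hx. apply Hz. rewrite Rmin_left, Rmax_right in Hx by lra.
    rewrite Rabs_right; lra.
  - intros x Hx. apply Hz. rewrite Rmin_left, Rmax_right in Hx by lra.
    rewrite Rabs_left; lra.
Qed.

Lemma uniform_continuity_param {X : UniformSpace} (f : X -> R -> R) (lo hi : R) (x : X)
  (e : posreal) :
  (forall x' t, continuous (fun p : X * R => f (fst p) (snd p)) (x', t)) ->
  exists d : posreal, forall y, ball x d y ->
    forall c, lo <= c <= hi -> Rabs (f y c - f x c) <= 2 * e.
Proof.
  intro Hc.
  assert (Hd : forall t, exists d : posreal, forall y s, ball x d y -> ball t d s ->
             Rabs (f y s - f x t) < e).
  { intro t. destruct (proj1 (filterlim_locally _ _) (Hc x t) e) as [d Hd].
    exists d. intros y s H1 H2. exact (Hd (y, s) (conj H1 H2)). }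
  destruct (choice _ Hd) as [delta Hdelta].
  destruct (compactness_value_1d lo hi delta) as [d Hcomp].
  exists d. intros y Hy c Hc'.
  apply NNPP. intro Hnot. apply (Hcomp c Hc'). intros [t [_ [Hct Hdt]]]. apply Hnot.
  assert (H1 : Rabs (f y c - f x t) < e)
    by (apply Hdelta; [apply ball_le with d | exact Hct]; auto).
  assert (H2 : Rabs (f x c - f x t) < e)
    by (apply Hdelta; [apply ball_center | exact Hct]).
  replace (f y c - f x c) with ((f y c - f x t) - (f x c - f x t)) by ring.
  eapply Rle_trans; [apply Rabs_triang|]. rewrite Rabs_Ropp. lra.
Qed.

Lemma RInt_param_continuous {X : UniformSpace} (f : X -> R -> R) (lo hi : R) (x : X) :
  lo <= hi ->
  (forall x' t, continuous (fun p : X * R => f (fst p) (snd p)) (x', t)) ->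
  continuous (fun y => RInt (f y) lo hi) x.
Proof.
  intros Hlh Hc. apply filterlim_locally. intros eps.
  assert (He : 0 < eps / (2 * (hi - lo + 1)))
    by (apply Rdiv_lt_0_compat; [apply cond_pos | lra]).
  destruct (uniform_continuity_param f lo hi x (mkposreal _ He) Hc) as [d Hd].
  exists d. intros y Hy.
  assert (Hex : forall z, ex_RInt (f z) lo hi).
  { intro z. apply (ex_RInt_continuous (V := R_CompleteNormedModule)). intros s _.
    apply continuous_section, Hc. }
  change (Rabs (RInt (f y) lo hi - RInt (f x) lo hi) < eps).
  rewrite <- (RInt_minus (f y) (f x)) by auto.
  eapply Rle_lt_trans; [apply abs_RInt_le_const; [exact Hlh | | exact (Hd y Hy)]|].
  - apply (ex_RInt_minus (f y) (f x)); auto.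
  - cbn [pos]. apply Rle_lt_trans with (eps * ((hi - lo) / (hi - lo + 1))).
    + right. field. lra.
    + pose proof (cond_pos eps).
      assert ((hi - lo) / (hi - lo + 1) < 1)
        by (apply Rmult_lt_reg_r with (hi - lo + 1); [lra | field_simplify; lra]).
      nra.
Qed.

Lemma RInt_derive_eq0 (h dh : R -> R) L : (forall x, is_derive h x (dh x)) ->
  (forall x, continuous dh x) -> h (-L) = 0 -> h L = 0 -> RInt dh (-L) L = 0.
Proof.
  intros Hd Hc Hl Hr. apply is_RInt_unique.
  replace 0 with (minus (h L) (h (-L))) by (rewrite Hl, Hr; apply Rminus_diag).
  apply (is_RInt_derive (V := R_CompleteNormedModule)); auto.
Qed.

Lemma is_derive_RInt_param_R (f df : R -> R -> R) lo hi x :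
  (forall u t, is_derive (fun u => f u t) u (df u t)) ->
  (forall z : R * R, continuous (fun z => df (fst z) (snd z)) z) ->
  (forall u t, continuous (f u) t) ->
  is_derive (fun u => RInt (f u) lo hi) x (RInt (df x) lo hi).
Proof.
  intros Hd Hc Hf.
  assert (Edf : forall u t, Derive (fun z => f z t) u = df u t)
    by (intros; apply is_derive_unique, Hd).
  rewrite <- (RInt_ext (fun t => Derive (fun u => f u t) x)) by (intros; apply Edf).
  apply (is_derive_RInt_param f lo hi x).
  - apply filter_forall. intros u t _. eexists. apply Hd.
  - intros t _. apply continuity_2d_pt_ext with df; [intros; symmetry; apply Edf|].
    apply continuity_2d_pt_filterlim, Hc.
  - apply filter_forall. intro u. apply ex_RInt_continuous_R, Hf.
Qed.

(** * Integrals over a cube *)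

Definition continuous3 (f : V3 -> R) : Prop := forall x, continuous f x.

Definition vanishes_off_cube (L : R) (f : V3 -> R) : Prop :=
  forall z, (exists i, L <= Rabs (coord3 i z)) -> f z = 0.

Definition slice_integral (L : R) (f : V3 -> R) (a b : R) : R :=
  RInt (fun c => f (mk3 a b c)) (-L) L.

Definition cube_integral (L : R) (f : V3 -> R) : R :=
  RInt (fun a => RInt (slice_integral L f a) (-L) L) (-L) L.

Lemma continuous3_mk3 {U : UniformSpace} (f : V3 -> R) (A B C : U -> R) x :
  continuous3 f -> continuous A x -> continuous B x -> continuous C x ->
  continuous (fun u => f (mk3 (A u) (B u) (C u))) x.
Proof.
  intros Hf HA HB HC. apply (continuous_comp (fun u => mk3 (A u) (B u) (C u)) f); [|apply Hf].
  unfold mk3. auto using continuous_pair.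
Qed.

Lemma continuous3_line (f : V3 -> R) a b c : continuous3 f -> continuous (fun c => f (mk3 a b c)) c.
Proof. intro Hf. apply continuous3_mk3; auto using continuous_const, continuous_id. Qed.

Section CubeIntegral.

Variable L : R.
Hypothesis L_ge0 : 0 <= L.

Lemma continuous_slice_integral (f : V3 -> R) (p : R * R) : continuous3 f ->
  continuous (fun p : R * R => slice_integral L f (fst p) (snd p)) p.
Proof.
  intro Hf. apply (RInt_param_continuous (fun (p : R * R) c => f (mk3 (fst p) (snd p) c))); [lra|].
  intros p' c. apply continuous3_mk3; auto.
  - apply (continuous_comp fst fst); apply continuous_fst.
  - apply (continuous_comp fst snd); [apply continuous_fst | apply continuous_snd].
  - apply continuous_snd.
Qed.

Lemma continuous_slice_integral_r (f : V3 -> R) a b : continuous3 f ->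
  continuous (slice_integral L f a) b.
Proof. intro Hf. apply continuous_section, continuous_slice_integral, Hf. Qed.

Lemma continuous_plane_integral (f : V3 -> R) a : continuous3 f ->
  continuous (fun a => RInt (slice_integral L f a) (-L) L) a.
Proof.
  intro Hf. apply (RInt_param_continuous (slice_integral L f)); [lra|].
  intros; apply continuous_slice_integral, Hf.
Qed.

Lemma int3_cube_integral (f : V3 -> R) : continuous3 f -> vanishes_off_cube L f ->
  int3 f = cube_integral L f.
Proof.
  intros Hc Hs. unfold int3, cube_integral.
  transitivity (RInt_gen (fun a => RInt_gen (fun b => slice_integral L f a b)
     (Rbar_locally m_infty) (Rbar_locally p_infty)) (Rbar_locally m_infty) (Rbar_locally p_infty)).
  { f_equal. apply functional_extensionality. intro a. f_equal.
    apply functional_extensionality. intro b.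
    apply RInt_gen_compact_support; auto using continuous3_line.
    intros c Hc'. apply Hs. now exists 2%nat. }
  transitivity (RInt_gen (fun a => RInt (slice_integral L f a) (-L) L)
     (Rbar_locally m_infty) (Rbar_locally p_infty)).
  { f_equal. apply functional_extensionality. intro a.
    apply RInt_gen_compact_support; auto using continuous_slice_integral_r.
    intros b Hb. apply RInt_eq0. intros c _. apply Hs. now exists 1%nat. }
  apply RInt_gen_compact_support; auto using continuous_plane_integral.
  intros a Ha. apply RInt_eq0. intros b _. apply RInt_eq0. intros c _.
  apply Hs. now exists 0%nat.
Qed.

Lemma cube_integral_plus (f g : V3 -> R) : continuous3 f -> continuous3 g ->
  cube_integral L (fun y => f y + g y) = cube_integral L f + cube_integral L g.
Proof.
  intros Hf Hg. unfold cube_integral.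
  rewrite <- RInt_plus_R by (apply ex_RInt_continuous_R; auto using continuous_plane_integral).
  apply RInt_ext. intros a _.
  rewrite <- RInt_plus_R by (apply ex_RInt_continuous_R; auto using continuous_slice_integral_r).
  apply RInt_ext. intros b _. unfold slice_integral.
  rewrite <- RInt_plus_R by (apply ex_RInt_continuous_R; auto using continuous3_line).
  reflexivity.
Qed.

Lemma is_derive_slice_integral_1 (f df : V3 -> R) b u : continuous3 f -> continuous3 df ->
  (forall a c, is_derive (fun s => f (mk3 s b c)) a (df (mk3 a b c))) ->
  is_derive (fun a => slice_integral L f a b) u (slice_integral L df u b).
Proof.
  intros Hf Hdf Hd. unfold slice_integral.
  refine (is_derive_RInt_param_R (fun u c => f (mk3 u b c)) (fun u c => df (mk3 u b c))
            (-L) L u Hd _ _).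
  - intro z. apply continuous3_mk3;
      [exact Hdf | apply continuous_fst | apply continuous_const | apply continuous_snd].
  - intros; apply continuous3_line, Hf.
Qed.

Lemma is_derive_slice_integral_2 (f df : V3 -> R) a u : continuous3 f -> continuous3 df ->
  (forall b c, is_derive (fun s => f (mk3 a s c)) b (df (mk3 a b c))) ->
  is_derive (slice_integral L f a) u (slice_integral L df a u).
Proof.
  intros Hf Hdf Hd. unfold slice_integral.
  refine (is_derive_RInt_param_R (fun u c => f (mk3 a u c)) (fun u c => df (mk3 a u c))
            (-L) L u Hd _ _).
  - intro z. apply continuous3_mk3;
      [exact Hdf | apply continuous_const | apply continuous_fst | apply continuous_snd].
  - intros; apply continuous3_line, Hf.
Qed.

Lemma cube_integral_deriv_eq0 (f df : V3 -> R) (j : nat) :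
  continuous3 f -> continuous3 df -> vanishes_off_cube L f ->
  (forall y, is_derive (fun s => f (set_coord3 j y s)) (coord3 j y) (df y)) ->
  cube_integral L df = 0.
Proof.
  intros Hf Hdf Hs Hd.
  assert (HL : forall x, x = - L \/ x = L -> L <= Rabs x)
    by (intros x [-> | ->]; rewrite ?Rabs_Ropp, Rabs_pos_eq; lra).
  unfold cube_integral. destruct j as [|[|j]].
  - apply (RInt_derive_eq0 (fun a => RInt (slice_integral L f a) (-L) L)).
    + intro a.
      refine (is_derive_RInt_param_R (slice_integral L f) (slice_integral L df) (-L) L a _ _ _).
      * intros u b. apply is_derive_slice_integral_1; auto. intros a' c. exact (Hd (mk3 a' b c)).
      * intro; apply continuous_slice_integral, Hdf.
      * intros; apply continuous_slice_integral_r, Hf.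
    + intro; apply continuous_plane_integral, Hdf.
    + apply RInt_eq0. intros b _. apply RInt_eq0. intros c _. apply Hs. exists 0%nat. auto.
    + apply RInt_eq0. intros b _. apply RInt_eq0. intros c _. apply Hs. exists 0%nat. auto.
  - apply RInt_eq0. intros a _.
    apply (RInt_derive_eq0 (slice_integral L f a)).
    + intro b. apply is_derive_slice_integral_2; auto. intros b' c. exact (Hd (mk3 a b' c)).
    + intro; apply continuous_slice_integral_r, Hdf.
    + apply RInt_eq0. intros c _. apply Hs. exists 1%nat. auto.
    + apply RInt_eq0. intros c _. apply Hs. exists 1%nat. auto.
  - apply RInt_eq0. intros a _. apply RInt_eq0. intros b _.
    apply (RInt_derive_eq0 (fun c => f (mk3 a b c))).
    + intro c. exact (Hd (mk3 a b c)).
    + intro; apply continuous3_line, Hdf.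
    + apply Hs. exists 2%nat. auto.
    + apply Hs. exists 2%nat. auto.
Qed.

End CubeIntegral.

Lemma vanishes_off_cube_le K K' f : K <= K' -> vanishes_off_cube K f -> vanishes_off_cube K' f.
Proof. intros HK Hf z [i Hi]. apply Hf. exists i. lra. Qed.

Lemma vanishes_off_cube_partial3 K f k :
  vanishes_off_cube K f -> vanishes_off_cube (K + 1) (partial3 k f).
Proof.
  intros Hf z [i Hi]. unfold partial3.
  rewrite (Derive_ext_loc _ (fun _ => 0)); [apply Derive_const|].
  exists (mkposreal 1 Rlt_0_1). intros s Hs. apply Hf. exists i.
  rewrite coord3_add3_scal3.
  assert (Hsb : Rabs (s * coord3 i (basis3 k)) < 1).
  { change (Rabs (s - 0) < 1) in Hs. rewrite Rminus_0_r in Hs. rewrite Rabs_mult.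
    pose proof (Rabs_coord3_basis3_le1 i k). pose proof (Rabs_pos s).
    pose proof (Rabs_pos (coord3 i (basis3 k))). nra. }
  pose proof (Rabs_triang_inv (coord3 i z) (- (s * coord3 i (basis3 k)))) as Htri.
  rewrite Rabs_Ropp in Htri. unfold Rminus in Htri. rewrite Ropp_involutive in Htri. lra.
Qed.

Lemma vanishes_off_cube_sub3 K M (g : V3 -> R) (h : V3 -> V3) :
  (forall y i, Rabs (coord3 i (h y)) <= M) -> vanishes_off_cube K g ->
  vanishes_off_cube (K + M) (fun y => g (sub3 y (h y))).
Proof.
  intros Hh Hg y [i Hi]. apply Hg. exists i. rewrite coord3_sub3.
  pose proof (Rabs_triang_inv (coord3 i y) (coord3 i (h y))). pose proof (Hh y i). lra.
Qed.

(** * The retarded-field identity *)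

Section RetardedIntegrals.

Variables (rho : V3 -> R) (q dq ddq dddq : R -> V3) (w : V3) (t : R).

Hypothesis rho_C1 : Ck3 1 rho.
Hypothesis q_dq : forall T, is_derive q T (dq T).
Hypothesis dq_ddq : forall T, is_derive dq T (ddq T).
Hypothesis ddq_dddq : forall T, is_derive ddq T (dddq T).
Hypothesis subluminal : forall T, dot3 w (dq T) <> 1.

Definition retarded_time (y : V3) : R := t + dot3 w y.
Definition retarded_offset (y : V3) : V3 := sub3 y (q (retarded_time y)).
Definition doppler (T : R) : R := 1 - dot3 w (dq T).

Definition flux_coef (j : nat) (T : R) : R := coord3 j (dq T) / doppler T.
Definition flux_coef' (j : nat) (T : R) : R :=
  (coord3 j (ddq T) * doppler T + coord3 j (dq T) * dot3 w (ddq T)) / doppler T ^ 2.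

Definition pibar_density (y : V3) : R :=
  dot3 (grad3 rho (retarded_offset y)) (dq (retarded_time y)).
Definition radiation_density (y : V3) : R :=
  rho (retarded_offset y) * dot3 w (ddq (retarded_time y)) / doppler (retarded_time y) ^ 2.

Definition flux (j : nat) (y : V3) : R :=
  rho (retarded_offset y) * flux_coef j (retarded_time y).
Definition flux_deriv (j : nat) (y : V3) : R :=
  (partial3 j rho (retarded_offset y) - coord3 j w * pibar_density y)
    * flux_coef j (retarded_time y)
  + rho (retarded_offset y) * (coord3 j w * flux_coef' j (retarded_time y)).

Lemma doppler_neq0 T : doppler T <> 0.
Proof. unfold doppler. specialize (subluminal T). lra. Qed.

Lemma is_derive_doppler T : is_derive doppler T (- dot3 w (ddq T)).
Proof.
  replace (- dot3 w (ddq T)) with (0 - dot3 w (ddq T)) by ring.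
  apply (is_derive_minus (V := R_NormedModule) (fun _ => 1) (fun T => dot3 w (dq T)) T 0).
  - apply (is_derive_const (V := R_NormedModule)).
  - apply is_derive_dot3, dq_ddq.
Qed.

Lemma is_derive_flux_coef j T : is_derive (flux_coef j) T (flux_coef' j T).
Proof.
  unfold flux_coef, flux_coef'.
  replace (coord3 j (ddq T) * doppler T + coord3 j (dq T) * dot3 w (ddq T))
    with (coord3 j (ddq T) * doppler T - coord3 j (dq T) * - dot3 w (ddq T)) by ring.
  apply is_derive_div;
    [apply is_derive_coord3, dq_ddq | apply is_derive_doppler | apply doppler_neq0].
Qed.

Lemma continuous_doppler T : continuous doppler T.
Proof. exact (continuous_of_is_derive _ _ _ (is_derive_doppler T)). Qed.

Lemma continuous_dq_coord i T : continuous (fun T => coord3 i (dq T)) T.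
Proof. exact (continuous_of_is_derive _ _ _ (is_derive_coord3 dq ddq i T (dq_ddq T))). Qed.

Lemma continuous_ddq_coord i T : continuous (fun T => coord3 i (ddq T)) T.
Proof. exact (continuous_of_is_derive _ _ _ (is_derive_coord3 ddq dddq i T (ddq_dddq T))). Qed.

Lemma continuous_flux_coef j T : continuous (flux_coef j) T.
Proof. exact (continuous_of_is_derive _ _ _ (is_derive_flux_coef j T)). Qed.

Lemma continuous_doppler_sq T : continuous (fun T => doppler T ^ 2) T.
Proof.
  apply (continuous_ext (fun T => doppler T * doppler T)); [intro; cbn; ring|].
  pose proof (continuous_doppler T). solve_continuous.
Qed.

Lemma continuous_dot3_ddq T : continuous (fun T => dot3 w (ddq T)) T.
Proof. exact (continuous_of_is_derive _ _ _ (is_derive_dot3 ddq dddq w T (ddq_dddq T))). Qed.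

Lemma continuous_flux_coef' j T : continuous (flux_coef' j) T.
Proof.
  apply continuous_Rdiv_fun;
    [| apply continuous_doppler_sq | apply pow_nonzero, doppler_neq0].
  pose proof (continuous_dq_coord j T). pose proof (continuous_ddq_coord j T).
  pose proof (continuous_doppler T). pose proof (continuous_dot3_ddq T).
  solve_continuous.
Qed.

Lemma continuous_retarded_time y : continuous retarded_time y.
Proof.
  apply (continuous_ext (fun y => t + (coord3 0 w * coord3 0 y + coord3 1 w * coord3 1 y
                                       + coord3 2 w * coord3 2 y))); [reflexivity|].
  solve_continuous.
Qed.

Lemma continuous_at_retarded_time (h : R -> R) y :
  (forall T, continuous h T) -> continuous (fun y => h (retarded_time y)) y.
Proof.
  intro Hh. apply (continuous_comp retarded_time h); auto using continuous_retarded_time.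
Qed.

Lemma continuous_retarded_offset y : continuous retarded_offset y.
Proof.
  apply (continuous_ext (fun y => mk3 (coord3 0 y - coord3 0 (q (retarded_time y)))
                                      (coord3 1 y - coord3 1 (q (retarded_time y)))
                                      (coord3 2 y - coord3 2 (q (retarded_time y)))));
    [reflexivity|].
  assert (Hq : forall i, continuous (fun y => coord3 i (q (retarded_time y))) y).
  { intro i. apply (continuous_at_retarded_time (fun T => coord3 i (q T))). intro T.
    exact (continuous_of_is_derive _ _ _ (is_derive_coord3 q dq i T (q_dq T))). }
  pose proof (Hq 0%nat). pose proof (Hq 1%nat). pose proof (Hq 2%nat).
  unfold mk3. repeat apply continuous_pair; solve_continuous.
Qed.

Lemma continuous_at_retarded_offset (g : V3 -> R) y :
  continuous3 g -> continuous (fun y => g (retarded_offset y)) y.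
Proof.
  intro Hg. apply (continuous_comp retarded_offset g); auto using continuous_retarded_offset.
Qed.

Lemma continuous3_pibar_density : continuous3 pibar_density.
Proof.
  intro y.
  apply (continuous_ext (fun y =>
      partial3 0 rho (retarded_offset y) * coord3 0 (dq (retarded_time y))
    + partial3 1 rho (retarded_offset y) * coord3 1 (dq (retarded_time y))
    + partial3 2 rho (retarded_offset y) * coord3 2 (dq (retarded_time y)))); [reflexivity|].
  assert (Hp : forall i, continuous (fun y : V3 => partial3 i rho (retarded_offset y)) y)
    by (intro i; apply (continuous_at_retarded_offset (partial3 i rho));
        intro x; apply C1_continuous_partial3, rho_C1).
  assert (Hv : forall i, continuous (fun y : V3 => coord3 i (dq (retarded_time y))) y)
    by (intro i; apply (continuous_at_retarded_time (fun T => coord3 i (dq T))),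
        continuous_dq_coord).
  pose proof (Hp 0%nat). pose proof (Hp 1%nat). pose proof (Hp 2%nat).
  pose proof (Hv 0%nat). pose proof (Hv 1%nat). pose proof (Hv 2%nat).
  solve_continuous.
Qed.

Lemma continuous3_rho_offset : continuous3 (fun y => rho (retarded_offset y)).
Proof. intro y. apply (continuous_at_retarded_offset rho). exact (proj1 rho_C1). Qed.

Lemma continuous3_radiation_density : continuous3 radiation_density.
Proof.
  intro y.
  apply (continuous_ext (fun y => rho (retarded_offset y)
           * (dot3 w (ddq (retarded_time y)) / doppler (retarded_time y) ^ 2)));
    [intro; symmetry; apply Rmult_assoc|].
  apply continuous_Rmult; [apply continuous3_rho_offset|].
  apply (continuous_at_retarded_time (fun T => dot3 w (ddq T) / doppler T ^ 2)). intro T.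
  apply continuous_Rdiv_fun;
    [apply continuous_dot3_ddq | apply continuous_doppler_sq | apply pow_nonzero, doppler_neq0].
Qed.

Lemma continuous3_flux j : continuous3 (flux j).
Proof.
  intro y. apply continuous_Rmult; [apply continuous3_rho_offset|].
  apply (continuous_at_retarded_time (flux_coef j)), continuous_flux_coef.
Qed.

Lemma continuous3_flux_deriv j : continuous3 (flux_deriv j).
Proof.
  intro y.
  pose proof (continuous3_rho_offset y). pose proof (continuous3_pibar_density y).
  assert (continuous (fun y : V3 => partial3 j rho (retarded_offset y)) y)
    by (apply (continuous_at_retarded_offset (partial3 j rho)); intro x;
        apply C1_continuous_partial3, rho_C1).
  assert (continuous (fun y => flux_coef j (retarded_time y)) y)
    by apply (continuous_at_retarded_time (flux_coef j)), continuous_flux_coef.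
  assert (continuous (fun y => flux_coef' j (retarded_time y)) y)
    by apply (continuous_at_retarded_time (flux_coef' j)), continuous_flux_coef'.
  unfold flux_deriv. solve_continuous.
Qed.

Lemma is_derive_retarded_time_line j y s :
  is_derive (fun s => retarded_time (set_coord3 j y s)) s (coord3 j w).
Proof.
  apply (is_derive_ext_R (fun s => retarded_time y + coord3 j w * (s - coord3 j y))).
  { intro r. unfold retarded_time. rewrite dot3_set_coord3. ring. }
  auto_derive; [exact I | ring].
Qed.

Lemma is_derive_retarded_offset_line j y :
  is_derive (fun s => retarded_offset (set_coord3 j y s)) (coord3 j y)
    (sub3 (basis3 j) (scal3 (coord3 j w) (dq (retarded_time y)))).
Proof.
  apply is_derive_V3. intro i. rewrite coord3_sub3, coord3_scal3.
  apply (is_derive_ext_R (fun s => (coord3 i y + (s - coord3 j y) * coord3 i (basis3 j))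
                                 - coord3 i (q (retarded_time (set_coord3 j y s))))).
  { intro s. unfold retarded_offset.
    rewrite coord3_sub3, set_coord3_add3, coord3_add3_scal3. reflexivity. }
  apply (is_derive_minus (V := R_NormedModule)).
  - auto_derive; [exact I | ring].
  - rewrite <- (set_coord3_coord3 j y) at 2.
    apply (is_derive_comp (fun T => coord3 i (q T))).
    + apply is_derive_coord3, q_dq.
    + apply is_derive_retarded_time_line.
Qed.

Lemma is_derive_flux j y :
  is_derive (fun s => flux j (set_coord3 j y s)) (coord3 j y) (flux_deriv j y).
Proof.
  pose proof (is_derive_C1_comp rho _ _ _ rho_C1 (is_derive_retarded_offset_line j y)) as Hrho.
  pose proof (is_derive_comp (flux_coef j) _ _ _ _ (is_derive_flux_coef j _)
                (is_derive_retarded_time_line j y (coord3 j y))) as Hcoef.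
  pose proof (is_derive_Rmult _ _ _ _ _ Hrho Hcoef) as H.
  cbv beta in H. rewrite set_coord3_coord3 in H.
  replace (flux_deriv j y) with
    (dot3 (grad3 rho (retarded_offset y))
          (sub3 (basis3 j) (scal3 (coord3 j w) (dq (retarded_time y))))
       * flux_coef j (retarded_time y)
     + rho (retarded_offset y) * (coord3 j w * flux_coef' j (retarded_time y))); [exact H|].
  unfold flux_deriv, pibar_density. rewrite <- dot3_grad3_basis3.
  unfold dot3, sub3, scal3; cbn. ring.
Qed.

Lemma flux_deriv_sum y :
  flux_deriv 0 y + flux_deriv 1 y + flux_deriv 2 y = pibar_density y + radiation_density y.
Proof.
  pose proof (doppler_neq0 (retarded_time y)) as HW.
  unfold flux_deriv, flux_coef, flux_coef', radiation_density, pibar_density, doppler in *.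
  unfold dot3, grad3 in *. cbn [coord3 Defs.c1 Defs.c2 Defs.c3 mk3 fst snd].
  field. exact HW.
Qed.

Variables (K M : R).
Hypothesis K_ge0 : 0 <= K.
Hypothesis rho_vanishes : vanishes_off_cube K rho.
Hypothesis q_bounded : forall T i, Rabs (coord3 i (q T)) <= M.

Let L := K + 1 + M.

Lemma L_ge0 : 0 <= L.
Proof. pose proof (q_bounded 0 0%nat). pose proof (Rabs_pos (coord3 0 (q 0))). unfold L. lra. Qed.

Lemma vanishes_off_cube_rho_offset : vanishes_off_cube L (fun y => rho (retarded_offset y)).
Proof.
  apply (vanishes_off_cube_le (K + M)); [unfold L; lra|].
  exact (vanishes_off_cube_sub3 K M rho (fun y => q (retarded_time y))
           (fun y => q_bounded (retarded_time y)) rho_vanishes).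
Qed.

Lemma vanishes_off_cube_partial3_offset k :
  vanishes_off_cube L (fun y => partial3 k rho (retarded_offset y)).
Proof.
  exact (vanishes_off_cube_sub3 (K + 1) M (partial3 k rho) (fun y => q (retarded_time y))
           (fun y => q_bounded (retarded_time y))
           (vanishes_off_cube_partial3 K rho k rho_vanishes)).
Qed.

Lemma cube_integral_pibar_radiation :
  cube_integral L pibar_density + cube_integral L radiation_density = 0.
Proof.
  assert (Hflux : forall j, cube_integral L (flux_deriv j) = 0).
  { intro j. apply (cube_integral_deriv_eq0 L L_ge0 (flux j) (flux_deriv j) j).
    - apply continuous3_flux.
    - apply continuous3_flux_deriv.
    - intros y Hy. unfold flux. rewrite (vanishes_off_cube_rho_offset y Hy). ring.
    - apply is_derive_flux. }
  rewrite <- (cube_integral_plus L L_ge0)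
    by auto using continuous3_pibar_density, continuous3_radiation_density.
  rewrite (functional_extensionality _ _ (fun y => eq_sym (flux_deriv_sum y))).
  rewrite !(cube_integral_plus L L_ge0); auto using continuous3_flux_deriv.
  - rewrite !Hflux. ring.
  - intro y. apply continuous_Rplus; apply continuous3_flux_deriv.
Qed.

Lemma pibar_eq_radiation_integral :
  pibar rho q dq w t = / (4 * PI) * int3 radiation_density.
Proof.
  change (- / (4 * PI) * int3 pibar_density = / (4 * PI) * int3 radiation_density).
  rewrite (int3_cube_integral L L_ge0 pibar_density),
    (int3_cube_integral L L_ge0 radiation_density).
  - pose proof cube_integral_pibar_radiation.
    replace (cube_integral L pibar_density) with (- cube_integral L radiation_density) by lra.
    ring.
  - apply continuous3_radiation_density.
  - intros y Hy. unfold radiation_density. rewrite (vanishes_off_cube_rho_offset y Hy).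
    unfold Rdiv. ring.
  - apply continuous3_pibar_density.
  - intros y Hy. unfold pibar_density, dot3, grad3. cbn [Defs.c1 Defs.c2 Defs.c3 mk3 fst snd].
    rewrite !(fun k => vanishes_off_cube_partial3_offset k y Hy). ring.
Qed.

End RetardedIntegrals.

(** * The velocity bound *)

Lemma coord3_derive_eq0 (v dv : R -> V3) i :
  (forall T, is_derive v T (dv T)) -> (forall T, coord3 i (v T) = 0) ->
  forall T, coord3 i (dv T) = 0.
Proof.
  intros Hv H0 T.
  rewrite <- (is_derive_unique _ _ _ (is_derive_coord3 v dv i T (Hv T))).
  rewrite (Derive_ext _ (fun _ => 0)) by apply H0. apply Derive_const.
Qed.

Lemma norm3_le_qbar1 (dq : R -> V3) M : (forall T, norm3 (dq T) <= M) ->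
  forall T, norm3 (dq T) <= qbar1 dq.
Proof.
  intros HM T. unfold qbar1.
  destruct (Lub_Rbar_correct (fun r => exists T, r = norm3 (dq T))) as [Hub Hlub].
  destruct (Lub_Rbar (fun r => exists T, r = norm3 (dq T))) as [r| |]; cbn.
  - exact (Hub _ (ex_intro _ T eq_refl)).
  - destruct (Hlub (Finite M)). intros x [T' ->]. apply HM.
  - destruct (Hub _ (ex_intro _ T eq_refl)).
Qed.

Lemma norm3_sq (v : V3) : norm3 v ^ 2 = dot3 v v.
Proof.
  apply pow2_sqrt. destruct v as [[a b] c]. unfold dot3; cbn. nra.
Qed.

Lemma dot3_sq_le_horizontal (w v : V3) : norm3 w = 1 -> Defs.c3 v = 0 ->
  dot3 w v ^ 2 <= (1 - Defs.c3 w ^ 2) * norm3 v ^ 2.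
Proof.
  intros Hw Hv. pose proof (norm3_sq w) as Ew. rewrite Hw, norm3_sq in *.
  destruct w as [[w1 w2] w3], v as [[v1 v2] v3]. unfold dot3 in *; cbn in *. subst v3.
  pose proof (pow2_ge_0 (w1 * v2 - w2 * v1)). nra.
Qed.

Lemma Theta_bound (qb eps w3 : R) : 0 <= qb -> (1 <= qb -> 0 < eps) ->
  w3 ^ 2 <= 1 -> Theta qb eps <= Rabs w3 -> (1 - w3 ^ 2) * qb ^ 2 < 1.
Proof.
  intros Hqb Heps Hw3 Hth. unfold Theta in Hth.
  destruct (Rlt_dec qb 1) as [Hlt | Hge].
  - pose proof (pow2_ge_0 w3). nra.
  - specialize (Heps ltac:(lra)).
    assert (Hq2 : 1 <= qb ^ 2) by nra.
    assert (Hinv : 0 < / qb ^ 2 <= 1)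
      by (split; [apply Rinv_0_lt_compat; lra | rewrite <- Rinv_1; apply Rinv_le_contravar; lra]).
    pose proof (pow2_sqrt (1 - / qb ^ 2) ltac:(lra)) as Es.
    pose proof (sqrt_pos (1 - / qb ^ 2)).
    assert (Hs : sqrt (1 - / qb ^ 2) ^ 2 < w3 ^ 2).
    { rewrite <- (pow2_abs w3). nra. }
    assert (Hprod : / qb ^ 2 * qb ^ 2 = 1) by (apply Rinv_l; lra).
    nra.
Qed.

Lemma Rabs_dot3_lt1 (w v : V3) qb eps : norm3 w = 1 -> Defs.c3 v = 0 -> norm3 v <= qb ->
  (1 <= qb -> 0 < eps) -> Theta qb eps <= Rabs (Defs.c3 w) -> Rabs (dot3 w v) < 1.
Proof.
  intros Hw Hv Hqb Heps Hth.
  pose proof (dot3_sq_le_horizontal w v Hw Hv).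
  assert (Hw3 : Defs.c3 w ^ 2 <= 1).
  { pose proof (norm3_sq w) as Ew. rewrite Hw in Ew.
    destruct w as [[w1 w2] w3]. unfold dot3 in Ew; cbn in *. nra. }
  pose proof (sqrt_pos (dot3 v v)).
  pose proof (Theta_bound qb eps (Defs.c3 w) ltac:(unfold norm3 in *; lra) Heps Hw3 Hth).
  assert (norm3 v ^ 2 <= qb ^ 2) by (apply pow_incr; unfold norm3 in *; lra).
  assert (dot3 w v ^ 2 < 1) by nra.
  apply Rabs_def1; nra.
Qed.

Theorem lemma3p2
  (rho : V3 -> R) (R_rho : R)
  (Hrho_smooth : smooth3 rho)
  (Hrho_radial : radial3 rho)
  (HR_rho : 0 < R_rho)
  (Hrho_supp : forall x, R_rho <= norm3 x -> rho x = 0)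
  (q dq ddq dddq : R -> V3)
  (Hdq : forall t, is_derive q t (dq t))
  (Hddq : forall t, is_derive dq t (ddq t))
  (Hdddq : forall t, is_derive ddq t (dddq t))
  (Hbound : exists M, forall t,
      norm3 (q t) <= M /\ norm3 (dq t) <= M /\
      norm3 (ddq t) <= M /\ norm3 (dddq t) <= M)
  (Hq3 : forall t, c3 (q t) = 0)
  (eps : R)
  (Heps : 1 <= qbar1 dq -> 0 < eps < 1 - sqrt (1 - / (qbar1 dq ^ 2)))
  (omega : V3)
  (Homega : norm3 omega = 1)
  (Htheta : Theta (qbar1 dq) eps <= Rabs (c3 omega))
  (t : R) :
  pibar rho q dq omega t =
  / (4 * PI) *
  int3 (fun y => let tau := t + dot3 omega y in
                 rho (sub3 y (q tau)) * dot3 omega (ddq tau)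
                 / (1 - dot3 omega (dq tau)) ^ 2).
Proof.
  destruct Hbound as [M HM].
  assert (Hqbar := norm3_le_qbar1 dq M (fun T => proj1 (proj2 (HM T)))).
  assert (Hsubluminal : forall T, dot3 omega (dq T) <> 1).
  { intro T.
    assert (Hflat : c3 (dq T) = 0) by exact (coord3_derive_eq0 q dq 2 Hdq Hq3 T).
    pose proof (Rabs_dot3_lt1 omega (dq T) (qbar1 dq) eps Homega Hflat (Hqbar T)
                  (fun H => proj1 (Heps H)) Htheta) as Hlt.
    apply Rabs_def2 in Hlt. lra. }
  apply (pibar_eq_radiation_integral rho q dq ddq dddq omega t (Hrho_smooth 1%nat)
           Hdq Hddq Hdddq Hsubluminal R_rho M).
  - lra.
  - intros z [i Hi]. apply Hrho_supp.
    eapply Rle_trans; [exact Hi | apply Rabs_coord3_le_norm3].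
  - intros T i. eapply Rle_trans; [apply Rabs_coord3_le_norm3 | apply HM].
Qed.
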